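(* Let $t\ge0$ and $b_0,\dots,b_t\ge0$ be integers and let $M=\{0^{(b_0)},1^{(b_1)},\dots,t^{(b_t)}\}$ be the multiset containing $b_i$ copies of $i$. Then the number of vn-arrangements of $M$ is \[\prod_{i=0}^{t-1}\binom{b_i+b_{i+1}}{b_i}.\]
   Context: Let $b=b_0+\cdots+b_t$. A vn-arrangement of the multiset $M$ is a sequence $(v_1,\dots,v_b)$ that lists the elements of $M$ with their multiplicities (i.e., an arrangement of $M$) such that $v_{i+1}-v_i\le1$ for all $1\le i<b$. An empty product equals $1$. *)

From mathcomp Require Import all_boot.
Set Implicit Arguments. Unset Strict Implicit. Unset Printing Implicit Defensive.

Definition msetM (t : nat) (b : nat -> nat) : seq nat :=
  flatten [seq nseq (b i) i | i <- iota 0 t.+1].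

(* v_{i+1} - v_i <= 1 (integer difference), i.e. v_{i+1} <= v_i + 1. *)
Definition vn_cond (s : seq nat) : bool :=
  sorted (fun x y => y <= x.+1) s.

Definition vn_arrangements (t : nat) (b : nat -> nat) : seq (seq nat) :=
  [seq s <- undup (permutations (msetM t b)) | vn_cond s].

From mathcomp Require Import all_boot zify.
Set Implicit Arguments. Unset Strict Implicit. Unset Printing Implicit Defensive.

(* Let c = t+1 be the largest letter. A copy of c can only be entered from c-1 or c,
   and any smaller letter may follow it, so deleting the copies of c from a
   vn-arrangement of M leaves a vn-arrangement of the smaller multiset. Conversely
   the copies of c go back in runs placed at the start or right after one of the
   b_t copies of t, so the b_(t+1) copies are distributed over b_t + 1 slots:
   C(b_t + b_(t+1), b_t) choices, whatever the smaller arrangement. *)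

Lemma perm_cat_nseq (T : eqType) (c : T) (m x : seq T) (n : nat) : c \notin m ->
  perm_eq x (m ++ nseq n c) = perm_eq [seq z <- x | z != c] m && (count_mem c x == n).
Proof.
move=> cNm; apply/idP/andP => [x_perm | [xc_perm /eqP <-]].
  split.
    have := perm_filter (predC1 c) x_perm.
    rewrite filter_cat filter_nseq /= eqxx mul0n cats0.
    suff /all_filterP -> : all (predC1 c) m by [].
    by apply/allP => z zm /=; apply: contraNneq cNm => <-.
  rewrite (permP x_perm) count_cat count_nseq /= eqxx mul1n.
  by move/count_memPn: cNm => ->.
apply: (@perm_trans _ (filter (pred1 c) x ++ filter (predC (pred1 c)) x)).
  by rewrite perm_sym perm_filterC.
rewrite perm_catC perm_cat //.
rewrite (all_pred1P c _ (filter_all _ x)) size_filter.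
exact: perm_refl.
Qed.

Definition vn_step : rel nat := fun u v => v <= u.+1.

Definition vn_into (c : nat) : rel nat := fun u v => (v == c) ==> vn_step u v.

Lemma vn_cond_path a x : head 0 x <= a.+1 -> vn_cond x = path vn_step a x.
Proof. by case: x => //= z x za; rewrite -[vn_step a z]/(z <= a.+1) za. Qed.

Lemma path_vn_filter c a x : all (fun z => z <= c) x ->
  path vn_step a x = path vn_step a [seq z <- x | z != c] && path (vn_into c) a x.
Proof.
elim: x a => [|z x IHx] a //= /andP [zc xc].
case: eqP => [->|/eqP zNc] /=; rewrite IHx //; last first.
  by rewrite /vn_into (negbTE zNc) andbA.
rewrite /vn_into eqxx /= andbCA; case ac: (vn_step a c); rewrite ?andbF //=.
have : all (fun y => y < c) [seq y <- x | y != c].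
  by rewrite all_filter; apply: sub_all xc => y /= yc; apply/implyP; rewrite ltn_neqAle yc andbT.
case: [seq y <- x | y != c] => //= y s /andP [yc _].
have -> : vn_step c y by rewrite /vn_step; lia.
by have -> : vn_step a y by move: ac; rewrite /vn_step; lia.
Qed.

Lemma vn_cond_filter c x : all (fun z => z <= c) x ->
  vn_cond x = vn_cond [seq z <- x | z != c] && path (vn_into c) c x.
Proof.
move=> xc; have head_le s : all (fun z => z <= c) s -> head 0 s <= c.+1.
  by case: s => //= z s /andP [zc _]; apply: leqW.
have fc : all (fun z => z <= c) [seq z <- x | z != c].
  by rewrite all_filter; apply: sub_all xc => z /= ->; rewrite implybT.
by rewrite (vn_cond_path (head_le _ xc)) (vn_cond_path (head_le _ fc)) (path_vn_filter _ xc).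
Qed.

Lemma cons_injr (T : Type) (z : T) : injective (cons z).
Proof. by move=> s1 s2 []. Qed.

Lemma mem_map_cons (T : eqType) (y z : T) w (L : seq (seq T)) :
  (z :: w \in map (cons y) L) = (z == y) && (w \in L).
Proof.
by apply/mapP/andP => [[w' wL [-> ->]] | [/eqP -> wL]]; [rewrite eqxx | exists w].
Qed.

(* The sequences [nseq k c ++ r] with [r \in R (n - k)], where [k = 0] unless [p]. *)
Fixpoint lead_runs (c : nat) (p : bool) (R : nat -> seq (seq nat)) (n : nat) : seq (seq nat) :=
  (if n is m.+1 then if p then map (cons c) (lead_runs c p R m) else [::] else [::]) ++ R n.

(* [a] plays the role of a letter preceding [s]; see [mem_insertions]. *)
Fixpoint insertions (c a : nat) (s : seq nat) : nat -> seq (seq nat) :=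
  lead_runs c (vn_step a c)
    (if s is y :: s' then fun n => map (cons y) (insertions c y s' n)
     else fun n => if n is 0 then [:: [::]] else [::]).

Lemma insertions_nil c a :
  insertions c a [::] = lead_runs c (vn_step a c) (fun n => if n is 0 then [:: [::]] else [::]).
Proof. by []. Qed.

Lemma insertions_cons c a y s :
  insertions c a (y :: s) = lead_runs c (vn_step a c) (fun n => map (cons y) (insertions c y s n)).
Proof. by []. Qed.

Lemma size_lead_runs c p R k : (forall n, size (R n) = 'C((k + n).-1, n)) ->
  forall n, size (lead_runs c p R n) = 'C((p + k + n).-1, n).
Proof.
move=> sizeR; elim=> [|n IHn] /=; first by rewrite sizeR !bin0.
rewrite size_cat sizeR; case: p IHn => /= IHn; last by rewrite add0n.
by rewrite size_map IHn add0n !addnS binS addnC.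
Qed.

Lemma uniq_lead_runs c p R : (forall n, uniq (R n)) -> (forall n w, c :: w \notin R n) ->
  forall n, uniq (lead_runs c p R n).
Proof.
move=> uniqR cNR; elim=> [|n IHn] //=; case: p IHn => IHn //=.
rewrite cat_uniq (map_inj_uniq (@cons_injr _ c)) IHn uniqR andbT /=.
by apply/hasPn => x xR; apply/mapP => -[w _ xE]; move: xR; rewrite xE (negbTE (cNR _ _)).
Qed.

Lemma mem_lead_runs c p R n x : (x \in lead_runs c p R n) =
  (x \in R n) ||
  (if x is z :: w then [&& z == c, p, 0 < n & w \in lead_runs c p R n.-1] else false).
Proof.
case: n => [|n] /=; first by case: x => [|z w]; rewrite ?andbF ?orbF.
rewrite mem_cat orbC; congr (_ || _); case: p; case: x => [|z w] //=; rewrite ?andbF //.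
  by apply/mapP => -[].
by apply/mapP/andP => [[w' w'R [-> ->]] //|[/eqP -> wR]]; exists w.
Qed.

Lemma mem_lead_runs_lead c p R n w : (forall m, c :: w \notin R m) ->
  (c :: w \in lead_runs c p R n) = [&& p, 0 < n & w \in lead_runs c p R n.-1].
Proof. by move=> cNR; rewrite mem_lead_runs (negbTE (cNR n)) eqxx. Qed.

Lemma size_insertions c a s n :
  size (insertions c a s n) = 'C((count (vn_step^~ c) (a :: s) + n).-1, n).
Proof.
elim: s a n => [|y s IHs] a n /=; apply: size_lead_runs => m.
  by case: m => [|m] /=; rewrite ?bin0 // bin_small.
by rewrite size_map IHs.
Qed.

Lemma uniq_insertions c a s n : c \notin s -> uniq (insertions c a s n).
Proof.
elim: s a n => [|y s IHs] a n.
  by move=> _; apply: uniq_lead_runs => [[|m]|[|m] w].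
rewrite inE negb_or => /andP [cNy cNs]; apply: uniq_lead_runs => [m|m w].
  by rewrite (map_inj_uniq (@cons_injr _ y)) IHs.
by rewrite mem_map_cons (negbTE cNy).
Qed.

Lemma mem_insertions_lead c a s n w : c \notin s ->
  (c :: w \in insertions c a s n) = [&& vn_step a c, 0 < n & w \in insertions c c s n.-1].
Proof.
have cc : vn_step c c by exact: leqnSn.
case: s => [|y s] => [_|]; last rewrite inE negb_or => /andP [cNy _].
  by rewrite !insertions_nil mem_lead_runs_lead ?cc; case: (vn_step a c) => //; case.
rewrite !insertions_cons mem_lead_runs_lead ?cc; first by case: (vn_step a c).
by move=> m; rewrite mem_map_cons (negbTE cNy).
Qed.

Lemma mem_insertions c a s n x : c \notin s ->
  (x \in insertions c a s n) =
  [&& [seq z <- x | z != c] == s, count_mem c x == n & path (vn_into c) a x].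
Proof.
elim: x a s n => [|z w IHw] a s n cNs.
  case: s cNs => [|y s] _; rewrite ?insertions_nil ?insertions_cons mem_lead_runs /= orbF.
    by case: n.
  by apply/mapP => -[].
case: (eqVneq z c) => [->|zNc].
  rewrite mem_insertions_lead // IHw //= eqxx /vn_into eqxx /=.
  by case: n => [|n]; rewrite /= ?eqSS; case: (vn_step a c); rewrite /= ?andbF.
case: s cNs => [|y s] => [_|]; last rewrite inE negb_or => /andP [cNy cNs];
  rewrite ?insertions_nil ?insertions_cons mem_lead_runs (negbTE zNc) /= orbF zNc.
  by case: n.
rewrite mem_map_cons eqseq_cons IHw // /vn_into (negbTE zNc) /=.
by case: eqP => [->|]; rewrite ?andbA.
Qed.

Lemma size_fibers (T U : eqType) (f : T -> U) (A : seq U) (B : seq T) (F : U -> seq T) :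
  uniq A -> uniq B -> {in A, forall s, uniq (F s)} ->
  {in A, forall s, {in F s, forall x, f x = s}} ->
  (forall x, (x \in B) = (f x \in A) && (x \in F (f x))) ->
  size B = sumn [seq size (F s) | s <- A].
Proof.
move=> uniqA uniqB uniqF fF memB; rewrite -(size_allpairs_dep (fun _ x => x)).
apply/esym/perm_size/uniq_perm => // [|x].
  apply: allpairs_uniq_dep => // -[s1 x1] [s2 x2].
  move=> /allpairsPdep [s1' [x1' [s1A x1F [-> ->]]]] /allpairsPdep [s2' [x2' [s2A x2F [-> ->]]]].
  by move=> /= x12; rewrite -(fF _ s1A _ x1F) -(fF _ s2A _ x2F) x12.
rewrite memB; apply/allpairsPdep/andP => [[s [y [sA yF ->]]] | [xA xF]].
  by rewrite (fF _ sA _ yF).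
by exists (f x), x.
Qed.

Definition vn_arrangements_of (m : seq nat) : seq (seq nat) :=
  [seq s <- undup (permutations m) | vn_cond s].

Lemma mem_vn_arrangements_of m x :
  (x \in vn_arrangements_of m) = perm_eq x m && vn_cond x.
Proof. by rewrite mem_filter mem_undup mem_permutations andbC. Qed.

Lemma uniq_vn_arrangements_of m : uniq (vn_arrangements_of m).
Proof. exact/filter_uniq/undup_uniq. Qed.

Lemma mem_vn_arrangements_of_cat_nseq m c n x : all (fun z => z < c) m ->
  (x \in vn_arrangements_of (m ++ nseq n c)) =
  ([seq z <- x | z != c] \in vn_arrangements_of m) &&
  (x \in insertions c c [seq z <- x | z != c] n).
Proof.
move=> mc; have cNm : c \notin m by apply/negP => /(allP mc); rewrite ltnn.
have cNf : c \notin [seq z <- x | z != c] by rewrite mem_filter eqxx.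
rewrite !mem_vn_arrangements_of perm_cat_nseq // mem_insertions // eqxx /=.
case fm: (perm_eq _ m) => //=.
have xc : all (fun z => z <= c) x.
  apply/allP => z zx; case: (eqVneq z c) => [-> // | zNc].
  by apply/ltnW/(allP mc); rewrite -(perm_mem fm) mem_filter zNc.
by rewrite (vn_cond_filter xc) andbCA.
Qed.

Lemma size_vn_arrangements_of_cat_nseq m c n : all (fun z => z < c) m ->
  size (vn_arrangements_of (m ++ nseq n c)) =
  size (vn_arrangements_of m) * 'C(count (vn_step^~ c) m + n, n).
Proof.
move=> mc; have cNm : c \notin m by apply/negP => /(allP mc); rewrite ltnn.
have cNs s : s \in vn_arrangements_of m -> c \notin s.
  by rewrite mem_vn_arrangements_of => /andP [/perm_mem ->].
set K := 'C(_, n); have sizeF s : s \in vn_arrangements_of m -> size (insertions c c s n) = K.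
  rewrite mem_vn_arrangements_of => /andP [sm _].
  by rewrite size_insertions /= [vn_step c c]leqnSn add1n addSn (permP sm).
rewrite (size_fibers (f := fun x => [seq z <- x | z != c]) (F := fun s => insertions c c s n)
  (uniq_vn_arrangements_of m) (uniq_vn_arrangements_of (m ++ nseq n c))) => [||s sA x|x].
- have /all_pred1P -> : all (pred1 K) [seq size (insertions c c s n) | s <- vn_arrangements_of m].
    by apply/allP => _ /mapP [s sA ->]; rewrite /= sizeF.
  by rewrite sumn_nseq size_map mulnC.
- by move=> s /cNs /uniq_insertions.
- by rewrite mem_insertions ?cNs // => /and3P [/eqP].
- exact: mem_vn_arrangements_of_cat_nseq.
Qed.

Lemma vn_arrangementsE t b : vn_arrangements t b = vn_arrangements_of (msetM t b).
Proof. by []. Qed.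

Lemma msetM0 b : msetM 0 b = [::] ++ nseq (b 0) 0.
Proof. by rewrite /msetM /= cats0. Qed.

Lemma msetMS t b : msetM t.+1 b = msetM t b ++ nseq (b t.+1) t.+1.
Proof. by rewrite /msetM -addn1 iotaD map_cat flatten_cat /= cats0. Qed.

Lemma msetM_lt t b : all (fun z => z < t.+1) (msetM t b).
Proof.
apply/allP => z /flattenP [_ /mapP [i it ->] /nseqP [-> _]].
by rewrite mem_iota in it.
Qed.

Lemma count_vn_step_msetM t b : count (vn_step^~ t.+1) (msetM t b) = b t.
Proof.
case: t => [|t]; rewrite ?msetM0 ?msetMS count_cat count_nseq /vn_step /= ?ltnSn ?mul1n //.
rewrite (@eq_in_count _ _ pred0) ?count_pred0 // => z /(allP (msetM_lt t b)) /=; lia.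
Qed.

Theorem proposition4p1 (t : nat) (b : nat -> nat) :
  size (vn_arrangements t b) = \prod_(0 <= i < t) 'C(b i + b i.+1, b i).
Proof.
elim: t => [|t IH].
  by rewrite big_geq // vn_arrangementsE msetM0 size_vn_arrangements_of_cat_nseq //= binn.
rewrite big_nat_recr //= -IH vn_arrangementsE msetMS.
rewrite size_vn_arrangements_of_cat_nseq ?msetM_lt // count_vn_step_msetM.
by rewrite -bin_sub ?leq_addl // addnK.
Qed.
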